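(* Let $M$ be a finite inverse monoid whose Green's relation $\mathscr{H}$ is trivial, and let $0$ be its zero. Let $\rho$ be a congruence of $M$ such that, for every $e\in E(M)$, if there exists $f\in E(M)$ with $f<e$ and $e\,\rho\, f$, then $e\,\rho\,0$. Then $\rho$ is a Rees congruence of $M$.
   Context: A finite inverse monoid with trivial $\mathscr{H}$-relation has a zero element. $E(M)$ is the set of idempotents of $M$, with natural partial order $e\leqslant f$ iff $ef=e=fe$; $f<e$ means $f\leqslant e$ and $f\neq e$. Green's relation $\mathscr{H}$: $a\mathscr{H}b$ iff $Ma=Mb$ and $aM=bM$. For an ideal $I$ of $M$ (i.e. $MIM\subseteq I$), the Rees congruence $\sim_I$ is defined by $a\sim_I b$ iff $a=b$ or $a,b\in I$. *)

From mathcomp Require Import all_boot.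
Set Implicit Arguments. Unset Strict Implicit. Unset Printing Implicit Defensive.

Section Defs.
Variables (T : Type) (mul : T -> T -> T) (one : T).

Definition is_monoid : Prop :=
  (forall a b c, mul a (mul b c) = mul (mul a b) c) /\
  (forall a, mul one a = a) /\ (forall a, mul a one = a).

Definition is_inverse_monoid : Prop :=
  is_monoid /\
  forall a, exists! b, mul a (mul b a) = a /\ mul b (mul a b) = b.

Definition idempotent_el (e : T) : Prop := mul e e = e.

Definition nat_le (e f : T) : Prop := mul e f = e /\ mul f e = e.
Definition nat_lt (f e : T) : Prop := nat_le f e /\ f <> e.

Definition greenH (a b : T) : Prop :=
  (forall c, (exists x, c = mul x a) <-> (exists x, c = mul x b)) /\
  (forall c, (exists x, c = mul a x) <-> (exists x, c = mul b x)).

Definition H_trivial : Prop := forall a b, greenH a b -> a = b.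

Definition is_zero (z : T) : Prop := forall a, mul z a = z /\ mul a z = z.

Definition is_congruence (rho : T -> T -> Prop) : Prop :=
  (forall a, rho a a) /\ (forall a b, rho a b -> rho b a) /\
  (forall a b c, rho a b -> rho b c -> rho a c) /\
  (forall a b c, rho a b -> rho (mul c a) (mul c b) /\ rho (mul a c) (mul b c)).

Definition is_ideal (I : T -> Prop) : Prop :=
  forall x a y, I a -> I (mul (mul x a) y).

Definition rees_cong (I : T -> Prop) (a b : T) : Prop := a = b \/ (I a /\ I b).

Definition is_rees_congruence (rho : T -> T -> Prop) : Prop :=
  exists I, is_ideal I /\ forall a b, rho a b <-> rees_cong I a b.
End Defs.

From mathcomp Require Import all_boot.

Set Implicit Arguments.
Unset Strict Implicit.
Unset Printing Implicit Defensive.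

(* A congruence on an inverse monoid respects inverses, so a rho b yields
   a a^-1 rho b b^-1 and a^-1 a rho b^-1 b.  Two rho-related idempotents e, f
   are equal or rho-related to 0: e f is rho-related to both and, unless
   e = e f = f, lies strictly below one of them.  Hence either a rho 0, or
   a a^-1 = b b^-1 and a^-1 a = b^-1 b, which makes a H b and so a = b.  Thus
   rho is the Rees congruence of the ideal {x | x rho 0}. *)

Section InverseMonoid.
Variables (T : Type) (mul : T -> T -> T) (one : T).
Hypothesis invM : is_inverse_monoid mul one.
Local Notation "x * y" := (mul x y).

Definition is_inverse (a b : T) : Prop := a * (b * a) = a /\ b * (a * b) = b.

Lemma mulA : associative mul.
Proof. by case: invM => [[]]. Qed.

Lemma exists_inverse a : exists b, is_inverse a b.
Proof. by case: invM => _ /(_ a) [b []]; exists b. Qed.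

Lemma inverse_unique a b c : is_inverse a b -> is_inverse a c -> b = c.
Proof. by case: invM => _ /(_ a) [d [_ uniq_d]] /uniq_d <- /uniq_d. Qed.

Lemma is_inverse_sym a b : is_inverse a b -> is_inverse b a.
Proof. by case. Qed.

Lemma mul_idem e : idempotent_el mul e -> forall c, c * e * e = c * e.
Proof. by move=> ee c; rewrite -mulA ee. Qed.

Lemma idempotent_inverse_eq e x :
  idempotent_el mul e -> is_inverse e x -> x = e.
Proof. by move=> ee /inverse_unique; apply; rewrite /is_inverse !ee. Qed.

Lemma idempotent_mul_inverse a b : is_inverse a b -> idempotent_el mul (a * b).
Proof. by case=> aba _; rewrite /idempotent_el mulA -(mulA a) aba. Qed.

Lemma idempotentM e f :
  idempotent_el mul e -> idempotent_el mul f -> idempotent_el mul (e * f).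
Proof.
move=> ee ff; have [x [efx xef]] := exists_inverse (e * f).
rewrite !mulA in efx.
have xef_c c : c * x * e * f * x = c * x.
  by rewrite -!mulA (mulA e f x) xef.
have g_idem : idempotent_el mul (f * x * e).
  by rewrite /idempotent_el !mulA xef_c.
have ef_g : is_inverse (e * f) (f * x * e).
  by split; rewrite !mulA !(mul_idem ee, mul_idem ff) ?efx ?xef_c.
by rewrite /idempotent_el (idempotent_inverse_eq g_idem (is_inverse_sym ef_g)).
Qed.

Lemma idempotentC e f :
  idempotent_el mul e -> idempotent_el mul f -> e * f = f * e.
Proof.
move=> ee ff.
have efef : e * f * e * f = e * f by rewrite -mulA; apply: idempotentM.
have fefe : f * e * f * e = f * e by rewrite -mulA; apply: idempotentM.
have ef_fe : is_inverse (e * f) (f * e).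
  by split; rewrite !mulA !(mul_idem ee, mul_idem ff) ?efef ?fefe.
by rewrite (idempotent_inverse_eq (idempotentM ee ff) ef_fe).
Qed.

Lemma nat_le_mull e f :
  idempotent_el mul e -> idempotent_el mul f -> nat_le mul (e * f) e.
Proof.
move=> ee ff; split; first by rewrite (idempotentC ee ff) mul_idem.
by rewrite mulA ee.
Qed.

Lemma nat_le_mulr e f :
  idempotent_el mul e -> idempotent_el mul f -> nat_le mul (e * f) f.
Proof. by move=> ee ff; rewrite (idempotentC ee ff); apply: nat_le_mull. Qed.

Lemma greenH_of_inverses a b a' b' :
  is_inverse a a' -> is_inverse b b' ->
  a * a' = b * b' -> a' * a = b' * b -> greenH mul a b.
Proof.
move=> [aa'a _] [bb'b _] eqR eqL.
split=> c; split=> -[x ->].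
- by exists (x * (a * b')); rewrite -!mulA -eqL aa'a.
- by exists (x * (b * a')); rewrite -!mulA eqL bb'b.
- by exists (b' * a * x); rewrite !mulA -eqR -(mulA a) aa'a.
- by exists (a' * b * x); rewrite !mulA eqR -(mulA b) bb'b.
Qed.

End InverseMonoid.

Section Congruence.
Variables (T : Type) (mul : T -> T -> T) (one : T) (rho : T -> T -> Prop).
Hypothesis invM : is_inverse_monoid mul one.
Hypothesis rho_cong : is_congruence mul rho.
Local Notation "x * y" := (mul x y).
Local Notation mulA := (mulA invM).

Lemma cong_refl a : rho a a.
Proof. by case: rho_cong. Qed.

Lemma cong_sym a b : rho a b -> rho b a.
Proof. by case: rho_cong => _ [sym _]; apply: sym. Qed.

Lemma cong_trans b a c : rho a b -> rho b c -> rho a c.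
Proof. by case: rho_cong => _ [_ [trans _]]; apply: trans. Qed.

Lemma cong_mull c a b : rho a b -> rho (c * a) (c * b).
Proof. by case: rho_cong => _ [_ [_ compat]] /(compat _ _ c) []. Qed.

Lemma cong_mulr c a b : rho a b -> rho (a * c) (b * c).
Proof. by case: rho_cong => _ [_ [_ compat]] /(compat _ _ c) []. Qed.

Section Inverses.
Variables (a b a' b' : T).
Hypothesis ab : rho a b.
Hypotheses (aa' : is_inverse mul a a') (bb' : is_inverse mul b b').

Let a'_aa' : a' = a' * a * a'.
Proof. by case: aa' => _; rewrite mulA. Qed.

Let rho_a'_a'ba' : rho a' (a' * b * a').
Proof. by rewrite {1}a'_aa'; apply/cong_mulr/cong_mull. Qed.

Lemma cong_inverse_absorbl : rho a' (b' * b * a').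
Proof.
apply: cong_trans rho_a'_a'ba' _.
apply: (cong_trans (b := a' * (a * b' * b) * a')).
  case: bb' => bb'b _; rewrite -{1}bb'b (mulA b).
  by apply/cong_mulr/cong_mull/cong_mulr/cong_mulr/cong_sym.
rewrite !mulA -(mulA (a' * a)).
rewrite (idempotentC invM (idempotent_mul_inverse invM (is_inverse_sym aa'))
                          (idempotent_mul_inverse invM (is_inverse_sym bb'))).
by case: aa' => _ a'aa'; rewrite -!mulA a'aa' mulA; apply: cong_refl.
Qed.

Lemma cong_inverse_absorbr : rho a' (a' * (b * b')).
Proof.
apply: cong_trans rho_a'_a'ba' _.
apply: (cong_trans (b := a' * (b * b' * a) * a')).
  case: bb' => bb'b _; rewrite -{1}bb'b (mulA b).
  by apply/cong_mulr/cong_mull/cong_mull/cong_sym.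
rewrite -(mulA a') -(mulA (b * b')).
rewrite (idempotentC invM (idempotent_mul_inverse invM bb')
                          (idempotent_mul_inverse invM aa')).
by case: aa' => _ a'aa'; rewrite !mulA -(mulA a') a'aa'; apply: cong_refl.
Qed.

End Inverses.

Lemma cong_inverse a b a' b' :
  rho a b -> is_inverse mul a a' -> is_inverse mul b b' -> rho a' b'.
Proof.
move=> ab aa' bb'.
apply: cong_trans (cong_inverse_absorbl ab aa' bb') _.
apply: (cong_trans (b := b' * (a * a'))).
  by rewrite -mulA; apply/cong_mull/cong_mulr/cong_sym.
exact/cong_sym/(cong_inverse_absorbr (cong_sym ab)).
Qed.

End Congruence.

Section ReesCongruence.
Variables (T : eqType) (mul : T -> T -> T) (one z : T) (rho : T -> T -> Prop).
Hypothesis invM : is_inverse_monoid mul one.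
Hypothesis rho_cong : is_congruence mul rho.
Hypotheses (H_triv : H_trivial mul) (zero_z : is_zero mul z).
Hypothesis collapse_below : forall e, idempotent_el mul e ->
  (exists f, idempotent_el mul f /\ nat_lt mul f e /\ rho e f) -> rho e z.
Local Notation "x * y" := (mul x y).
Let rho_sym := cong_sym rho_cong.
Let rho_trans := cong_trans rho_cong.
Let rho_mull := cong_mull rho_cong.
Let rho_mulr := cong_mulr rho_cong.

Lemma cong_idempotent_eq_or_zero e f :
  idempotent_el mul e -> idempotent_el mul f -> rho e f -> e = f \/ rho e z.
Proof.
move=> ee ff ef.
have collapse_above h : idempotent_el mul h -> rho h (e * f) ->
    nat_le mul (e * f) h -> e * f <> h -> rho h z.
  move=> hh h_ef ef_h ef_neq_h; apply: collapse_below => //.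
  by exists (e * f); split; [exact: (idempotentM invM) | split].
have e_ef : rho e (e * f) by rewrite -{1}ee; apply: rho_mull.
have f_ef : rho f (e * f) by rewrite -{1}ff; apply/rho_mulr/rho_sym.
have [efe | /eqP ef_neq_e] := eqVneq (e * f) e; last first.
  by right; apply: collapse_above => //; exact: (nat_le_mull invM).
have [eff | /eqP ef_neq_f] := eqVneq (e * f) f; first by left; rewrite -efe.
right; apply: rho_trans ef (collapse_above _ ff f_ef _ ef_neq_f).
exact: (nat_le_mulr invM).
Qed.

Lemma cong_eq_or_zero a b : rho a b -> a = b \/ rho a z.
Proof.
move=> ab.
have [a' aa'] := exists_inverse invM a; have [b' bb'] := exists_inverse invM b.
have a'b' := cong_inverse invM rho_cong ab aa' bb'.
have R_rel : rho (a * a') (b * b').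
  by apply: (rho_trans (b := b * a')); [apply: rho_mulr | apply: rho_mull].
have L_rel : rho (a' * a) (b' * b).
  by apply: (rho_trans (b := b' * a)); [apply: rho_mulr | apply: rho_mull].
have [aa'a _] := aa'; have [za az] := zero_z a.
have [eqR | R_zero] := cong_idempotent_eq_or_zero
  (idempotent_mul_inverse invM aa') (idempotent_mul_inverse invM bb') R_rel.
  have [eqL | L_zero] := cong_idempotent_eq_or_zero
    (idempotent_mul_inverse invM (is_inverse_sym aa'))
    (idempotent_mul_inverse invM (is_inverse_sym bb')) L_rel.
    by left; apply/H_triv/(greenH_of_inverses invM aa' bb').
  by right; rewrite -aa'a -az; apply: rho_mull.
by right; rewrite -aa'a (mulA invM) -za; apply: rho_mulr.
Qed.

Lemma cong_zero_class_ideal : is_ideal mul (rho^~ z).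
Proof.
move=> x a y az; have [_ xz] := zero_z x; have [zy _] := zero_z y.
by rewrite -zy -xz; apply/rho_mulr/rho_mull.
Qed.

End ReesCongruence.

Theorem lemma3p1 (T : finType) (mul : T -> T -> T) (one z : T)
  (rho : T -> T -> Prop) :
  is_inverse_monoid mul one ->
  H_trivial mul ->
  is_zero mul z ->
  is_congruence mul rho ->
  (forall e, idempotent_el mul e ->
     (exists f, idempotent_el mul f /\ nat_lt mul f e /\ rho e f) ->
     rho e z) ->
  is_rees_congruence mul rho.
Proof.
move=> invM H_triv zero_z rho_cong collapse_below.
exists (rho^~ z); split; first exact: cong_zero_class_ideal.
move=> a b; split.
- move=> ab; have [-> | az] :=
    cong_eq_or_zero invM rho_cong H_triv zero_z collapse_below ab; first by left.
  by right; split=> //; exact: (cong_trans rho_cong (cong_sym rho_cong ab) az).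
- case=> [-> | [az bz]]; first exact: (cong_refl rho_cong).
  exact: (cong_trans rho_cong az (cong_sym rho_cong bz)).
Qed.
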